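(* Let $p$ be a prime and $b$ an integer with $0<b\le b^{-1}<p$. Write $p=bq+r$ with $0\le r<b$ and $p=b^{-1}s+t$ with $0\le t<b^{-1}$ (division algorithm). Then $\mathrm{inv}_{1,b}$ has 2 slopes if and only if $r=s$ and $q=t$.
   Context: Let $S=\mathbb{C}[x_1,x_2]$, $\zeta=e^{2\pi i/p}$, $G=\mathbb{Z}/p\mathbb{Z}=\langle\zeta\rangle$ acting on $S$ by $x_1\mapsto\zeta x_1$, $x_2\mapsto\zeta^bx_2$, with invariant ring $S^G_{1,b}$ (spanned by monomials $x_1^cx_2^d$ with $c+bd\equiv0\pmod p$). $\mathrm{inv}_{1,b}$ denotes the minimal set of monomial generators of $S^G_{1,b}$ as a $\mathbb{C}$-algebra: the nonconstant invariant monomials that are not a product of two nonconstant invariant monomials. $b^{-1}$ is the unique integer $0<b^{-1}<p$ with $bb^{-1}\equiv1\pmod p$. Writing $\mathrm{inv}_{1,b}=\{x_1^{c_0}x_2^{d_0},\dots,x_1^{c_n}x_2^{d_n}\}$ in lexicographic order with $x_1>x_2$, set $\mathrm{sl}_{1,b}=\left\{\frac{d_{i+1}-d_i}{c_{i+1}-c_i}\;\middle|\;0\le i\le n-1\right\}$, the set of slopes between consecutive exponent vectors; $\mathrm{inv}_{1,b}$ is said to have 2 slopes if $|\mathrm{sl}_{1,b}|=2$. *)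

From mathcomp Require Import all_boot all_order all_algebra.
Set Implicit Arguments. Unset Strict Implicit. Unset Printing Implicit Defensive.
Import Order.TTheory GRing.Theory Num.Theory.

(* Exponent vector (c, d) stands for the monomial x1^c x2^d. *)

(* x1^c x2^d is invariant under x1 -> zeta x1, x2 -> zeta^b x2. *)
Definition is_invariant (p b : nat) (m : nat * nat) : bool :=
  (m.1 + b * m.2) %% p == 0.

Definition nonconst (m : nat * nat) : bool := m != (0, 0).

(* x1^c x2^d is a product of two nonconstant invariant monomials:
   any factorisation x1^c1 x2^d1 * x1^(c-c1) x2^(d-d1) has c1 <= c, d1 <= d. *)
Definition decomposable (p b : nat) (m : nat * nat) : bool :=
  [exists c1 : 'I_(m.1).+1, exists d1 : 'I_(m.2).+1,
     [&& is_invariant p b (val c1, val d1),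
         is_invariant p b (m.1 - c1, m.2 - d1),
         nonconst (val c1, val d1) & nonconst (m.1 - c1, m.2 - d1)]].

Definition is_min_gen (p b : nat) (m : nat * nat) : bool :=
  [&& is_invariant p b m, nonconst m & ~~ decomposable p b m].

Definition lexle (m n : nat * nat) : bool :=
  (m.1 < n.1) || ((m.1 == n.1) && (m.2 <= n.2)).

(* inv_{1,b} listed in lexicographic order.  Every minimal generator has
   both exponents <= p (x1^p and x2^p are invariant), so it suffices to
   search the box [0,p] x [0,p]. *)
Definition inv_list (p b : nat) : seq (nat * nat) :=
  sort lexle [seq m <- [seq (c, d) | c <- iota 0 p.+1, d <- iota 0 p.+1]
             | is_min_gen p b m].

Definition slope (m n : nat * nat) : rat :=
  ((n.2%:Z - m.2%:Z)%R%:~R / (n.1%:Z - m.1%:Z)%R%:~R)%R.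

Definition slopes (s : seq (nat * nat)) : seq rat :=
  [seq slope (nth (0,0) s i) (nth (0,0) s i.+1) | i <- iota 0 (size s).-1].

Definition has_two_slopes (p b : nat) : bool :=
  size (undup (slopes (inv_list p b))) == 2.

From mathcomp Require Import all_boot all_order all_algebra.
From mathcomp Require Import zify ring.
Set Implicit Arguments. Unset Strict Implicit. Unset Printing Implicit Defensive.
Import GRing.Theory.

(* Since b * binv = 1 (mod p), a monomial x1^c x2^d is invariant iff p divides
   c + b d, iff p divides binv c + d.  Lattice points on the segments
   binv c + d = p and c + b d = p are minimal generators, and a generator
   with binv c < p (resp. b d < p) lies on the first (resp. second) one.  So
   inv_{1,b} starts at (0, p) with slope -binv and ends at (p, 0) with slope
   -1/b, and for b > 1 these slopes differ.  If the two segments meet in a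
   lattice point (X, Y), every generator lies on one of them: two slopes.
   Conversely, if only these two slopes occur, walking along inv_{1,b} from
   (0, p) to (p, 0) writes (p, -p) = X (1, -binv) + Y (b, -1), and (X, Y) is
   a common lattice point.  Writing b binv = 1 + K p, such a point gives
   b = 1 + K X and binv = 1 + K Y, so X = r = s and Y = q = t.  For b = 1
   the segments coincide and there is a single slope. *)

Implicit Types (g m n x y z : nat * nat).

Definition lform (a e : nat) (m : nat * nat) : nat := a * m.1 + e * m.2.

Lemma lform_subnK a e m n : n.1 <= m.1 -> n.2 <= m.2 ->
  lform a e (m.1 - n.1, m.2 - n.2) + lform a e n = lform a e m.
Proof.
rewrite /lform /= !mulnBr => le1 le2.
by have := leq_mul2l a n.1 m.1; have := leq_mul2l e n.2 m.2; lia.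
Qed.

Lemma lform_gt0 a e m : 0 < a -> 0 < e -> nonconst m -> 0 < lform a e m.
Proof. by case: m => [[|c] [|d]] //= *; rewrite /lform /=; nia. Qed.

Lemma slope_lform a e x y : x.1 < y.1 -> 0 < e ->
  slope x y = (- (a%:R / e%:R))%R <-> lform a e x = lform a e y.
Proof.
move=> ltxy e_gt0; rewrite /slope /lform -mulNr !pmulrn -intrN.
have D0 : ((y.1%:Z - x.1%:Z)%R%:~R : rat) != 0%R.
  by rewrite intr_eq0 subr_eq0 eqz_nat; lia.
have e0 : ((e%:Z)%:~R : rat) != 0%R by rewrite intr_eq0 eqz_nat; lia.
rewrite (rwP eqP) eqr_div // -!intrM eqr_int; split => [/eqP|h]; [lia | apply/eqP; lia].
Qed.

Lemma dvdn_lt_double p k : p %| k -> 0 < k -> k < 2 * p -> k = p.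
Proof. by case/dvdnP => -[|[|j]] ->; lia. Qed.

Lemma mulinv_eq p b binv : 1 < p -> b * binv = 1 %[mod p] ->
  exists K, b * binv = 1 + K * p.
Proof.
move=> p_gt1 inv; exists (b * binv %/ p).
by rewrite {1}(divn_eq (b * binv) p) inv modn_small // addnC.
Qed.

Lemma dvdn_lform_swap p b binv m : b * binv = 1 %[mod p] ->
  (p %| lform 1 b m) = (p %| lform binv 1 m).
Proof.
rewrite /lform !mul1n => inv.
have swap1 : binv * (m.1 + b * m.2) = binv * m.1 + m.2 %[mod p].
  by rewrite mulnDr mulnA [binv * b]mulnC -modnDmr -modnMml inv modnMml mul1n modnDmr.
have swap2 : b * (binv * m.1 + m.2) = m.1 + b * m.2 %[mod p].
  by rewrite mulnDr mulnA -modnDml -modnMml inv modnMml mul1n modnDml.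
apply/idP/idP => dvd.
  by have := dvdn_mull binv dvd; rewrite /dvdn swap1.
by have := dvdn_mull b dvd; rewrite /dvdn swap2.
Qed.

Lemma divmod_meet p b binv : 1 < p -> 1 < b -> b * binv = 1 %[mod p] ->
  (p %% b = p %/ binv /\ p %/ b = p %% binv) <->
  exists m, lform 1 b m = p /\ lform binv 1 m = p.
Proof.
rewrite /lform => p_gt1 b_gt1 inv; split=> [[r_eq q_eq] | [[X Y] /= [eqB eqA]]].
  exists (p %% b, p %/ b); split; rewrite /= mul1n.
    by rewrite addnC mulnC -divn_eq.
  by rewrite r_eq q_eq mulnC -divn_eq.
rewrite !mul1n in eqB eqA.
have [K invK] := mulinv_eq p_gt1 inv.
have p_gt0 : 0 < p by lia.
have b_eq : b = 1 + K * X.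
  apply/eqP; rewrite -(eqn_pmul2r p_gt0); apply/eqP.
  rewrite -[in LHS]eqA mulnDr mulnA invK mulnDl mul1n addnAC eqB; ring.
have binv_eq : binv = 1 + K * Y.
  apply/eqP; rewrite -(eqn_pmul2r p_gt0); apply/eqP.
  rewrite -[in LHS]eqB mulnDr mulnA [binv * b]mulnC invK mulnDl mul1n addnA eqA.
  ring.
have K_gt0 : 0 < K by case: K b_eq {invK binv_eq} => [|K]; lia.
have [X_lt Y_lt] : X < b /\ Y < binv.
  by have := leq_pmull X K_gt0; have := leq_pmull Y K_gt0; lia.
have -> : p %% b = X by rewrite -eqB addnC mulnC modnMDl modn_small.
have -> : p %/ b = Y by rewrite -eqB addnC mulnC divnMDl ?divn_small; lia.
have -> : p %/ binv = X by rewrite -eqA mulnC divnMDl ?divn_small; lia.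
by rewrite -eqA mulnC modnMDl modn_small.
Qed.

Lemma size_undup_eq2 (T : eqType) (s : seq T) (A B : T) :
  A \in s -> B \in s -> A != B -> size (undup s) = 2 <-> {subset s <= [:: A; B]}.
Proof.
move=> sA sB neAB; have AB_uniq : uniq [:: A; B] by rewrite /= inE neAB.
have AB_sub : {subset [:: A; B] <= undup s}.
  by move=> z; rewrite !inE mem_undup => /orP[] /eqP ->.
split=> [size2 z sz | sub].
  have [_ eq_s] := uniq_min_size AB_uniq AB_sub (eq_leq size2).
  by rewrite eq_s mem_undup.
apply/eqP; rewrite eqn_leq (uniq_leq_size AB_uniq AB_sub) andbT.
by apply: (@uniq_leq_size _ _ [:: A; B] (undup_uniq s)) => z; rewrite mem_undup => /sub.
Qed.

Lemma mem_slopes_nth s i : i.+1 < size s ->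
  slope (nth (0, 0) s i) (nth (0, 0) s i.+1) \in slopes s.
Proof. by move=> hi; apply/mapP; exists i; rewrite // mem_iota; lia. Qed.

Section SortedSlopes.
Variable s : seq (nat * nat).
Hypothesis s_sorted : sorted [rel x y : nat * nat | x.1 < y.1] s.

Lemma nth_fst_ltn i j : i < j -> j < size s ->
  (nth (0, 0) s i).1 < (nth (0, 0) s j).1.
Proof.
move=> ij js; apply: (sorted_ltn_nth _ _ s_sorted); rewrite ?inE //; last lia.
by move=> y x z /= ; apply: ltn_trans.
Qed.

Lemma nth_fst_leq i j : i <= j -> j < size s ->
  (nth (0, 0) s i).1 <= (nth (0, 0) s j).1.
Proof.
by rewrite leq_eqVlt => /orP[/eqP -> //|ij] js; apply/ltnW/nth_fst_ltn.
Qed.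

Lemma mem_slopes_adjacent x y : x \in s -> y \in s -> x.1 < y.1 ->
  (forall z, z \in s -> ~~ (x.1 < z.1 < y.1)) -> slope x y \in slopes s.
Proof.
move=> xs ys ltxy between.
have [xi yi] := (nth_index (0, 0) xs, nth_index (0, 0) ys).
have [ix iy] : index x s < size s /\ index y s < size s by rewrite !index_mem.
have lt_ij : index x s < index y s.
  case: ltngtP => // [lt_ji|eq_ij]; last by move: ltxy; rewrite -xi -yi eq_ij ltnn.
  by have := nth_fst_ltn lt_ji ix; rewrite xi yi ltnNge (ltnW ltxy).
suff next : (index x s).+1 = index y s by rewrite -xi -yi -next mem_slopes_nth ?next.
apply/eqP; rewrite eqn_leq lt_ij /= leqNgt; apply/negP => lt_next.
have := between _ (mem_nth (0, 0) (ltn_trans lt_next iy)).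
by rewrite -{1}xi -yi nth_fst_ltn ?(ltn_trans lt_next) // nth_fst_ltn.
Qed.

Lemma slopes_adjacentP sl : sl \in slopes s -> exists x y,
  [/\ x \in s, y \in s, x.1 < y.1,
      forall z, z \in s -> ~~ (x.1 < z.1 < y.1) & sl = slope x y].
Proof.
case/mapP => i; rewrite mem_iota add0n => /andP[_ hi] ->.
have hi1 : i.+1 < size s by lia.
exists (nth (0, 0) s i), (nth (0, 0) s i.+1).
split; rewrite ?mem_nth ?nth_fst_ltn //; first exact: ltnW.
move=> _ /(nthP (0, 0)) [k hk <-]; apply/negP => /andP[lt_ik lt_ki].
case: (leqP k i) => [le_ki|lt_ik'].
  by have := nth_fst_leq le_ki (ltnW hi1); rewrite leqNgt lt_ik.
by have := nth_fst_leq lt_ik' hk; rewrite leqNgt lt_ki.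
Qed.
End SortedSlopes.

Definition reachable (b binv : nat) (x y : nat * nat) : Prop :=
  exists X Y, y.1 = x.1 + X + b * Y /\ x.2 = y.2 + binv * X + Y.

Section Reachable.
Variables b binv : nat.

Lemma reachable_trans x y z :
  reachable b binv x y -> reachable b binv y z -> reachable b binv x z.
Proof.
move=> [X [Y [xy1 xy2]]] [X' [Y' [yz1 yz2]]].
by exists (X + X'), (Y + Y'); rewrite !mulnDr; lia.
Qed.

Lemma reachable_lform x y : 0 < b -> x.1 <= y.1 ->
  lform binv 1 x = lform binv 1 y \/ lform 1 b x = lform 1 b y ->
  reachable b binv x y.
Proof.
rewrite /lform !mul1n => b_gt0 le_xy [eqA|eqB].
  exists (y.1 - x.1), 0; rewrite mulnBr; have := leq_mul2l binv x.1 y.1; lia.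
have le_yx : y.2 <= x.2 by rewrite -(leq_pmul2l b_gt0); lia.
by exists 0, (x.2 - y.2); rewrite mulnBr; have := leq_mul2l b y.2 x.2; lia.
Qed.

Lemma reachable_nth s :
  (forall i, i.+1 < size s ->
     reachable b binv (nth (0, 0) s i) (nth (0, 0) s i.+1)) ->
  forall k, k < size s -> reachable b binv (nth (0, 0) s 0) (nth (0, 0) s k).
Proof.
move=> step; elim=> [_|k IHk hk]; first by exists 0, 0; rewrite !muln0 !addn0.
exact: reachable_trans (IHk (ltnW hk)) (step k hk).
Qed.
End Reachable.

Section InvList.
Variables p b : nat.
Local Notation l := (inv_list p b).

Lemma is_invariantE m : is_invariant p b m = (p %| lform 1 b m).
Proof. by rewrite /is_invariant /lform mul1n /dvdn. Qed.

Lemma decomposableP m : reflect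
  (exists n : nat * nat, [/\ n.1 <= m.1 /\ n.2 <= m.2, is_invariant p b n,
     is_invariant p b (m.1 - n.1, m.2 - n.2), nonconst n
     & nonconst (m.1 - n.1, m.2 - n.2)])
  (decomposable p b m).
Proof.
apply: (iffP existsP) => [[c1 /existsP[d1 /and4P[? ? ? ?]]] | [[c1 d1] /= [[]]]].
  by exists (val c1, val d1); split=> //; split; rewrite -ltnS ltn_ord.
rewrite -[c1 <= _]ltnS -[d1 <= _]ltnS => c1_lt d1_lt *.
by exists (Ordinal c1_lt); apply/existsP; exists (Ordinal d1_lt); apply/and4P.
Qed.

Lemma mem_inv_list m :
  (m \in l) = [&& is_min_gen p b m, m.1 <= p & m.2 <= p].
Proof.
rewrite mem_sort mem_filter; congr andb; case: m => c d.
apply/allpairsPdep/andP => [[x [y [+ + [-> ->]]]] | [le_c le_d]].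
  by rewrite !mem_iota /=; lia.
by exists c, d; rewrite !mem_iota; split=> //; lia.
Qed.

Lemma mem_inv_listP m : m \in l ->
  [/\ is_invariant p b m, nonconst m, ~~ decomposable p b m, m.1 <= p & m.2 <= p].
Proof. by rewrite mem_inv_list => /and3P[/and3P[]]. Qed.

Lemma inv_list_antichain x y : x \in l -> y \in l ->
  x.1 <= y.1 -> x.2 <= y.2 -> x = y.
Proof.
case: x y => [x1 x2] [y1 y2] /mem_inv_listP[x_inv x_nc _ _ _].
move=> /mem_inv_listP[y_inv _ y_indec _ _] /= le1 le2.
apply/eqP; apply: contraNT y_indec => ne; apply/decomposableP.
exists (x1, x2); split=> //=.
  move: x_inv y_inv; rewrite !is_invariantE => x_inv y_inv.
  by rewrite -(dvdn_addl _ x_inv) (@lform_subnK 1 b (y1, y2) (x1, x2)).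
by rewrite /nonconst xpair_eqE !subn_eq0; apply: contra ne; rewrite xpair_eqE; lia.
Qed.

Lemma inv_list_fst_inj x y : x \in l -> y \in l -> x.1 = y.1 -> x = y.
Proof.
move=> xl yl eq1; case: (leqP x.2 y.2) => [le2|/ltnW le2].
  by apply: inv_list_antichain; rewrite ?eq1.
by apply/esym/inv_list_antichain; rewrite ?eq1.
Qed.

Lemma inv_list_snd_ltn x y : x \in l -> y \in l -> x.1 < y.1 -> y.2 < x.2.
Proof.
move=> xl yl lt1; rewrite ltnNge; apply/negP => le2.
by move: (lt1); rewrite (inv_list_antichain xl yl (ltnW lt1) le2) ltnn.
Qed.

Lemma sorted_inv_list : sorted [rel x y : nat * nat | x.1 < y.1] l.
Proof.
have l_uniq : uniq l.
  rewrite sort_uniq filter_uniq // allpairs_uniq ?iota_uniq //.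
  by move=> [? ?] [? ?] _ _ /= [-> ->].
have lexle_total : total lexle by move=> ? ?; rewrite /lexle; lia.
have -> : sorted [rel x y : nat * nat | x.1 < y.1] l = sorted ltn (map fst l).
  by rewrite sorted_map.
rewrite ltn_sorted_uniq_leq.
rewrite (map_inj_in_uniq (fun x y => @inv_list_fst_inj x y)) l_uniq sorted_map.
apply: sub_sorted (sort_sorted lexle_total _) => x y.
by case/orP=> [/ltnW //|/andP[/eqP /= -> _]] /=.
Qed.

Section LinearForm.
Variables a e : nat.
Hypotheses (a_gt0 : 0 < a) (e_gt0 : 0 < e).
Hypothesis invariant_lform : forall n, is_invariant p b n = (p %| lform a e n).

Lemma mem_inv_list_lform m : 0 < p -> lform a e m = p -> m \in l.
Proof.
move=> p_gt0 lm; rewrite mem_inv_list.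
have [le1 le2] : m.1 <= p /\ m.2 <= p.
  by rewrite -lm /lform; have := leq_pmull m.1 a_gt0; have := leq_pmull m.2 e_gt0; lia.
rewrite le1 le2 !andbT; apply/and3P; split.
- by rewrite invariant_lform lm.
- by apply: contraTneq p_gt0 => m0; rewrite -lm m0 /lform !muln0.
(* A decomposition would split p = lform a e m into two positive multiples of p. *)
apply/decomposableP => -[n [[le_n1 le_n2] n_inv r_inv n_nc r_nc]].
rewrite !invariant_lform in n_inv r_inv.
have := lform_subnK a e le_n1 le_n2; rewrite lm.
have := dvdn_leq (lform_gt0 a_gt0 e_gt0 n_nc) n_inv.
have := dvdn_leq (lform_gt0 a_gt0 e_gt0 r_nc) r_inv.
lia.
Qed.

Lemma inv_list_lform m : m \in l -> lform a e m < 2 * p -> lform a e m = p.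
Proof.
case/mem_inv_listP => m_inv m_nc _ _ _ lt2p.
by apply: dvdn_lt_double; rewrite -?invariant_lform ?lform_gt0.
Qed.
End LinearForm.
End InvList.

Lemma not_two_slopes_1 p : 1 < p -> ~~ has_two_slopes p 1.
Proof.
move=> p_gt1; have invariant11 := is_invariantE p 1.
have topl : (0, p) \in inv_list p 1.
  by apply: (mem_inv_list_lform _ _ invariant11) => //; rewrite ?/lform /=; lia.
have on_line g : g \in inv_list p 1 -> lform 1 1 g = p.
  move=> gl; have [_ _ _ le1 le2] := mem_inv_listP gl.
  case: (ltnP g.2 p) => [lt2|ge2].
    by apply: (inv_list_lform _ _ invariant11) => //; rewrite /lform; lia.
  by rewrite -(inv_list_antichain topl gl) //= /lform /=; lia.
rewrite /has_two_slopes; apply/negP => /eqP size2.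
suff : size (undup (slopes (inv_list p 1))) <= size [:: (- (1%:R / 1%:R))%R : rat].
  by rewrite size2.
apply: uniq_leq_size (undup_uniq _) _ => sl; rewrite mem_undup inE.
case/(slopes_adjacentP (sorted_inv_list p 1)) => x [y [xl yl lt_xy _ ->]].
by apply/eqP/(slope_lform _ lt_xy) => //; rewrite !on_line.
Qed.

Section TwoSlopes.
Variables p b binv : nat.
Hypotheses (p_gt1 : 1 < p) (b_gt0 : 0 < b) (b_ltp : b < p).
Hypotheses (binv_gt0 : 0 < binv) (binv_ltp : binv < p).
Hypothesis b_binv : b * binv = 1 %[mod p].
Local Notation l := (inv_list p b).
Local Notation slopeA := (- (binv%:R / 1%:R) : rat)%R.
Local Notation slopeB := (- (1%:R / b%:R) : rat)%R.

Let p_gt0 : 0 < p. Proof. exact: ltnW. Qed.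
Let invariantB := is_invariantE p b.
Let invariantA n : is_invariant p b n = (p %| lform binv 1 n).
Proof. by rewrite is_invariantE (dvdn_lform_swap _ b_binv). Qed.

Let top_mem : (0, p) \in l.
Proof. by apply: (mem_inv_list_lform _ _ invariantA) => //; rewrite /lform /=; lia. Qed.

Let bottom_mem : (p, 0) \in l.
Proof. by apply: (mem_inv_list_lform _ _ invariantB) => //; rewrite /lform /=; lia. Qed.

Lemma slopeA_mem : slopeA \in slopes l.
Proof.
have lt01 : (0, p).1 < (1, p - binv).1 by [].
rewrite -(slope_lform _ lt01 (ltn0Sn 0)).2; last by rewrite /lform /=; lia.
apply: mem_slopes_adjacent => //; first exact: sorted_inv_list.
  by apply: (mem_inv_list_lform _ _ invariantA) => //; rewrite /lform /=; lia.
by move=> z _ /=; lia.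
Qed.

Lemma slopeB_mem : slopeB \in slopes l.
Proof.
have lt_pb : (p - b, 1).1 < (p, 0).1 by rewrite /=; lia.
have next_mem : (p - b, 1) \in l.
  by apply: (mem_inv_list_lform _ _ invariantB) => //; rewrite /lform /=; lia.
rewrite -(slope_lform _ lt_pb b_gt0).2; last by rewrite /lform /=; lia.
apply: mem_slopes_adjacent => //; first exact: sorted_inv_list.
move=> z zl; apply/negP => /andP[gt_z lt_z].
have z2 : z.2 = 0.
  by apply/eqP; rewrite -leqn0 -ltnS; exact: inv_list_snd_ltn next_mem zl gt_z.
have [_ _ _ z1_le _] := mem_inv_listP zl.
by move: lt_z; rewrite (inv_list_antichain zl bottom_mem) ?z2 ?ltnn.
Qed.

Lemma slopeA_neq_B : 1 < b -> slopeA != slopeB.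
Proof.
move=> b_gt1; apply/eqP => eqAB.
have lt01 : (0, p).1 < (1, p - binv).1 by [].
have eqA : slope (0, p) (1, p - binv) = slopeA.
  by apply/(slope_lform _ lt01 (ltn0Sn 0)); rewrite /lform /=; lia.
have : lform 1 b (0, p) = lform 1 b (1, p - binv).
  by apply/(slope_lform _ lt01 b_gt0); rewrite eqA eqAB.
rewrite /lform /= mulnBr.
by have := leq_mul2l b binv p; have := leq_pmulr b binv_gt0; lia.
Qed.

Section Meet.
Variable m : nat * nat.
Hypotheses (meetB : lform 1 b m = p) (meetA : lform binv 1 m = p).

Let meet_mem : m \in l.
Proof. exact: (mem_inv_list_lform _ _ invariantB). Qed.

Lemma lformA_left g : g \in l -> g.1 <= m.1 -> lform binv 1 g = p.
Proof.
move=> gl; rewrite leq_eqVlt => /orP[/eqP/(inv_list_fst_inj gl meet_mem) -> //|lt1].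
have [_ _ _ _ le2] := mem_inv_listP gl.
apply: (inv_list_lform _ _ invariantA) => //; move: meetA; rewrite /lform.
have : binv * g.1 < binv * m.1 by rewrite ltn_pmul2l.
lia.
Qed.

Lemma lformB_right g : g \in l -> m.1 <= g.1 -> lform 1 b g = p.
Proof.
move=> gl; rewrite leq_eqVlt => /orP[/eqP/esym/(inv_list_fst_inj gl meet_mem) -> //|lt1].
have [_ _ _ le1 _] := mem_inv_listP gl.
have lt2 := inv_list_snd_ltn meet_mem gl lt1.
apply: (inv_list_lform _ _ invariantB) => //; move: meetB; rewrite /lform.
have : b * g.2 < b * m.2 by rewrite ltn_pmul2l.
lia.
Qed.

Lemma two_slopes_of_meet : 1 < b -> has_two_slopes p b.
Proof.
move=> b_gt1; apply/eqP/(size_undup_eq2 slopeA_mem slopeB_mem (slopeA_neq_B b_gt1)).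
move=> _ /(slopes_adjacentP (sorted_inv_list p b)) [x [y [xl yl lt_xy adj ->]]].
rewrite !inE; case: (leqP y.1 m.1) => [le_ym|lt_my].
  apply/orP; left; apply/eqP/(slope_lform _ lt_xy (ltn0Sn 0)).
  by rewrite !lformA_left // ltnW // (leq_trans lt_xy).
case: (leqP m.1 x.1) => [le_mx|lt_xm].
  apply/orP; right; apply/eqP/(slope_lform _ lt_xy b_gt0).
  by rewrite !lformB_right // ltnW // (leq_ltn_trans le_mx).
by have := adj _ meet_mem; rewrite lt_xm lt_my.
Qed.
End Meet.

Lemma meet_of_two_slopes : 1 < b -> has_two_slopes p b ->
  exists m, lform 1 b m = p /\ lform binv 1 m = p.
Proof.
move=> b_gt1 /eqP/(size_undup_eq2 slopeA_mem slopeB_mem (slopeA_neq_B b_gt1)) slopesAB.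
have l_sorted := sorted_inv_list p b.
have step i : i.+1 < size l -> reachable b binv (nth (0, 0) l i) (nth (0, 0) l i.+1).
  move=> hi; have lt_i := nth_fst_ltn l_sorted (ltnSn i) hi.
  apply: reachable_lform (ltnW lt_i) _ => //.
  have := slopesAB _ (mem_slopes_nth hi); rewrite !inE => /orP[] /eqP.
    by move/(slope_lform _ lt_i (ltn0Sn 0)); left.
  by move/(slope_lform _ lt_i b_gt0); right.
have first : nth (0, 0) l 0 = (0, p).
  have := nth_index (0, 0) top_mem; case: (posnP (index (0, p) l)) => [-> //|pos].
  move=> top_eq; have := nth_fst_ltn l_sorted pos; rewrite index_mem top_eq.
  by move/(_ top_mem); rewrite ltn0.
have bottom_idx : index (p, 0) l < size l by rewrite index_mem.
have [X [Y]] := reachable_nth step bottom_idx.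
rewrite first nth_index //= => -[eqX eqY].
by exists (X, Y); rewrite /lform /=; lia.
Qed.

Lemma two_slopes_meetP : 1 < b ->
  has_two_slopes p b <-> exists m, lform 1 b m = p /\ lform binv 1 m = p.
Proof.
move=> b_gt1; split; first exact: meet_of_two_slopes.
by case=> m [meetB meetA]; apply: two_slopes_of_meet meetB meetA b_gt1.
Qed.
End TwoSlopes.

Theorem theorem6p2 (p b binv : nat) :
  prime p ->
  (* binv = b^{-1}: the unique integer with 0 < binv < p and b * binv = 1 mod p *)
  0 < binv < p -> b * binv = 1 %[mod p] ->
  0 < b -> b <= binv ->
  (has_two_slopes p b <->
     (p %% b = p %/ binv /\ p %/ b = p %% binv)).
Proof.
move=> /prime_gt1 p_gt1 /andP[binv_gt0 binv_ltp] b_binv b_gt0 b_le_binv.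
have b_ltp : b < p := leq_ltn_trans b_le_binv binv_ltp.
have [b_le1|b_gt1] := leqP b 1.
  have -> : b = 1 by lia.
  split=> [two|[]]; first by have := not_two_slopes_1 p_gt1; rewrite two.
  rewrite modn1 => div0 _.
  by have := divn_gt0 p binv_gt0; rewrite -div0 ltnn (ltnW binv_ltp).
apply: iff_trans (two_slopes_meetP p_gt1 b_gt0 b_ltp binv_gt0 binv_ltp b_binv b_gt1) _.
exact: iff_sym (divmod_meet p_gt1 b_gt1 b_binv).
Qed.
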